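(* (1) For every permutation $w\in S_k$ there is a sequence $\mathbf b=(b_1,\dots,b_{k-1})$ of non-negative integers with $\sum_i b_i=\ell(w)$ such that the coefficient of $v^{\mathbf b}$ in $R_w$ is non-zero. (2) For every matching sequence $\mathbf b=(b_1,\dots,b_{k-1})$ there is a permutation $w\in S_k$ with $\ell(w)=\sum_i b_i$ such that the coefficient of $v^{\mathbf b}$ in $R_w$ is non-zero.
   Context: Fix $k\ge 2$. Permutations $u\in S_k$ are written in one-line notation $u=(u(1),\dots,u(k))$. An inversion of $u$ is a pair of positions $(i,j)$ with $i<j$ and $u(i)>u(j)$; $\ell(u)$ is the number of inversions. For $1\le n<m\le k$ let $u\circ(n\,m)$ denote the permutation obtained from $u$ by swapping the entries in positions $n$ and $m$. We say $u'$ covers $u$ if $u'=u\circ(n\,m)$ for some $n<m$ and $\ell(u')=\ell(u)+1$; the weight of this cover is $v_n+v_{n+1}+\dots+v_{m-1}$. For $w\in S_k$, $R_w\in\mathbb Z[v_1,\dots,v_{k-1}]$ is the sum, over all chains $\mathrm{id}=u_0,u_1,\dots,u_{\ell(w)}=w$ in which each $u_{i+1}$ covers $u_i$, of the product of the weights of the covers $u_i\to u_{i+1}$. $v^{\mathbf b}=v_1^{b_1}\cdots v_{k-1}^{b_{k-1}}$. The bipartite graph $\mathcal B_{\mathbf b}$ has upper vertex class $U=\{(j,l):1\le j\le l\le k-1\}$ and lower vertex class $D_{\mathbf b}=\{(i,t):1\le i\le k-1,\ 1\le t\le b_i\}$, with an edge between $(j,l)\in U$ and $(i,t)\in D_{\mathbf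 b}$ if and only if $j\le i\le l$; $\mathbf b$ is a matching sequence if $\mathcal B_{\mathbf b}$ has a matching covering all of $D_{\mathbf b}$. *)

From HB Require Import structures.
From mathcomp Require Import all_boot all_order all_algebra all_fingroup.
Set Implicit Arguments. Unset Strict Implicit. Unset Printing Implicit Defensive.
Import GRing.Theory.

(* Conventions: positions and values of u : 'S_k are 0-based ('I_k);
   position p (0-based) = position p+1 of the paper.  Variable index
   j : 'I_k.-1 stands for v_{j+1}. *)

Definition mono (n : nat) := {ffun 'I_n -> nat}.
Definition mulm n (a b : mono n) : mono n := [ffun i => a i + b i].
Definition mono1 n : mono n := [ffun => 0%N].
Definition monoX n (j : 'I_n) : mono n := [ffun i => (i == j) : nat].

(* a polynomial is a finite formal sum of terms c * v^a *)
Definition mpoly (n : nat) := seq (mono n * int).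
Definition madd n (p q : mpoly n) : mpoly n := p ++ q.
Definition mmul n (p q : mpoly n) : mpoly n :=
  [seq (mulm a.1 b.1, (a.2 * b.2)%R) | a <- p, b <- q].
Definition mone n : mpoly n := [:: (mono1 n, 1%R)].
Definition mvar n (j : 'I_n) : mpoly n := [:: (monoX j, 1%R)].
Definition mcoef n (p : mpoly n) (b : mono n) : int :=
  (\sum_(t <- p | t.1 == b) t.2)%R.

Definition ell k (u : 'S_k) : nat :=
  #|[set p : 'I_k * 'I_k | (p.1 < p.2) && (u p.2 < u p.1)]|.

(* u o (n m): swap the entries in positions n and m *)
Definition swap_pos k (u : 'S_k) (n m : 'I_k) : 'S_k := (tperm n m * u)%g.
Lemma swap_posE k (u : 'S_k) (n m i : 'I_k) : swap_pos u n m i = u (tperm n m i).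
Proof. by rewrite /swap_pos permM. Qed.

Definition covers k (u u' : 'S_k) : bool :=
  [exists n : 'I_k, exists m : 'I_k, (n < m) && (u' == swap_pos u n m)]
  && (ell u' == (ell u).+1).

(* weight v_n + ... + v_{m-1} (paper, 1-based) = sum of variables with
   0-based index j, n <= j < m (0-based positions n < m) *)
Definition linform k (n m : 'I_k) : mpoly k.-1 :=
  flatten [seq mvar j | j : 'I_k.-1 <- enum {: 'I_k.-1} & (n <= j) && (j < m)].

(* weight of the cover u -> u'; the pair (n,m) is unique for a cover *)
Definition cover_wt k (u u' : 'S_k) : mpoly k.-1 :=
  flatten [seq linform p.1 p.2 | p : 'I_k * 'I_k <- enum {: 'I_k * 'I_k} &
             (p.1 < p.2) && (u' == swap_pos u p.1 p.2)].

Definition is_chain k (w : 'S_k) (s : (ell w).+1.-tuple 'S_k) : bool :=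
  [&& nth 1%g s 0 == 1%g, nth 1%g s (ell w) == w &
      all (fun i => covers (nth 1%g s i) (nth 1%g s i.+1)) (iota 0 (ell w))].

Definition chain_wt k (w : 'S_k) (s : (ell w).+1.-tuple 'S_k) : mpoly k.-1 :=
  foldr (@mmul _) (mone _)
    [seq cover_wt (nth 1%g s i) (nth 1%g s i.+1) | i <- iota 0 (ell w)].

Definition Rpoly k (w : 'S_k) : mpoly k.-1 :=
  flatten [seq chain_wt s | s : (ell w).+1.-tuple 'S_k <- enum {: (ell w).+1.-tuple 'S_k} & is_chain s].

(* U = {(j,l) : j <= l}, D_b = {(i,t) : t < b i} (0-based); edge iff j <= i <= l.
   A matching covering D_b is an injective map D_b -> U along edges. *)
Definition matching_seq k (b : mono k.-1) : Prop :=
  exists f : 'I_k.-1 -> nat -> 'I_k.-1 * 'I_k.-1,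
    (forall i t, t < b i -> ((f i t).1 <= (f i t).2) && ((f i t).1 <= i <= (f i t).2))
    /\ (forall i t i' t', t < b i -> t' < b i' -> f i t = f i' t' -> i = i' /\ t = t').

From HB Require Import structures.
From mathcomp Require Import all_boot all_order all_algebra all_fingroup.
From mathcomp Require Import zify.
Set Implicit Arguments. Unset Strict Implicit. Unset Printing Implicit Defensive.
Import GRing.Theory.

(* No cancellation can occur in [Rpoly w]: every term carries coefficient 1, so
   [v^b] has a non-zero coefficient as soon as one chain produces it.

   (1) A permutation [w <> 1] has consecutive values [q + 1], [q] in positions
   [a < c]; swapping them gives [u] with [ell u = (ell w).-1].  Hence there is a
   chain from [1] to [w] all of whose covers transpose consecutive values, and
   picking the variable [v_a] in the weight of each cover gives a monomial of
   degree [ell w].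

   (2) Given a matching of [D_b] into [U], the permutation is built greedily,
   realising the lower vertices [(i, t)] row by row: each one is realised by a
   cover transposing consecutive values in positions [a <= i < c], which
   contributes [v_i].  The invariant keeps the values after position [i]
   increasing, together with a Hall-type inequality between the pending
   vertices matched to intervals [(j, l)] with [j <= i] and the supply of
   smaller values left of [i] available to the value in position [l + 1]. *)




Section Inversions.
Variable k : nat.
Implicit Types (u : 'S_k) (a c : 'I_k).

Definition inversions u := [set p : 'I_k * 'I_k | (p.1 < p.2) && (u p.2 < u p.1)].

Lemma ell_perm1 : ell (1%g : 'S_k) = 0.
Proof.
apply: eq_card0 => -[a c]; rewrite !inE /= !perm1.
by apply/negP => /andP[h1 h2]; move: h1 h2; lia.
Qed.

Lemma swap_posK u a c : swap_pos (swap_pos u a c) a c = u.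
Proof. by rewrite /swap_pos mulgA tperm2 mul1g. Qed.

Lemma swap_pos_tperm u a c p : swap_pos u a c p = tperm (u a) (u c) (u p).
Proof. by rewrite swap_posE -(permJ (tperm a c) u p) tpermJ. Qed.

Lemma ltn_tperm_succ (x y p p' : 'I_k) : val y = (val x).+1 -> p != p' ->
  ~~ ((p == x) && (p' == y)) -> ~~ ((p == y) && (p' == x)) ->
  (tperm x y p < tperm x y p') = (p < p').
Proof.
move=> hy hpp' h1 h2.
case: (tpermP x y p) => [ep|ep|npx npy]; case: (tpermP x y p') => [ep'|ep'|np'x np'y];
  subst.
all: move: hpp' h1 h2; rewrite -?val_eqE /= ?hy.
all: try move: npx npy; try move: np'x np'y; rewrite -?val_eqE /= ?hy.
all: lia.
Qed.

Lemma ell_swap_succ u a c : a < c -> val (u c) = (val (u a)).+1 ->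
  ell (swap_pos u a c) = (ell u).+1.
Proof.
move=> ac huc.
have ac_new : (a, c) \notin inversions u by rewrite inE /= ac /= -leqNgt huc.
suff key : inversions (swap_pos u a c) = (a, c) |: inversions u.
  by rewrite /ell -/(inversions (swap_pos u a c)) -/(inversions u) key cardsU1 ac_new.
apply/setP => -[p p']; rewrite !inE /= !swap_pos_tperm.
have [/andP[/eqP-> /eqP->]|hne] := boolP ((p == a) && (p' == c)).
  by rewrite eqxx ac tpermL tpermR huc ltnSn.
rewrite -[(p, p') == _]/((p == a) && (p' == c)) (negbTE hne) orFb.
case: (ltnP p p') => hpp' //=; apply: ltn_tperm_succ => //.
- by rewrite (inj_eq perm_inj) -val_eqE /=; lia.
- rewrite !(inj_eq perm_inj); apply/negP => /andP[/eqP e1 /eqP e2]; subst.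
  by move: hpp' ac; lia.
- by rewrite !(inj_eq perm_inj) andbC.
Qed.

End Inversions.

Lemma incr_bounded_id (g : nat -> nat) m :
  (forall q, q < m -> g q < g q.+1) -> (forall q, q <= m -> g q <= m) ->
  forall q, q <= m -> g q = q.
Proof.
move=> incr bnd.
have up q : q <= m -> q <= g q.
  by elim: q => [|q IH] qm //; have := incr q qm; have := IH (ltnW qm); lia.
have down d : d <= m -> g (m - d) <= m - d.
  elim: d => [|d IH] dm; first by rewrite subn0 bnd.
  have := incr (m - d.+1) ltac:(lia); have := IH (ltnW dm).
  by rewrite (_ : (m - d.+1).+1 = m - d); lia.
by move=> q qm; have := up q qm; have := down (m - q) (leq_subr _ _); rewrite subKn //; lia.
Qed.

(* If there is no such pair, [w^-1] is increasing, hence the identity. *)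
Lemma exists_adjacent_values m (w : 'S_m.+1) : w != 1%g ->
  exists a c : 'I_m.+1, a < c /\ val (w a) = (val (w c)).+1.
Proof.
move=> hw; case: (pickP (fun p : 'I_m.+1 * 'I_m.+1 =>
    (p.1 < p.2) && (val (w p.1) == (val (w p.2)).+1))) => [[a c] /andP[ac /eqP]|noinv].
  by exists a, c.
case/eqP: hw.
pose g q := val ((w^-1)%g (inord q)).
have incr q : q < m -> g q < g q.+1.
  move=> qm; rewrite ltnNge leq_eqVlt; apply/negP => /orP[/eqP/val_inj|lt].
    by move/(congr1 w); rewrite !permKV => /(congr1 val) /=; rewrite !inordK //; lia.
  have := noinv ((w^-1)%g (inord q.+1), (w^-1)%g (inord q)).
  by rewrite /= lt /= !permKV !inordK //; lia.
have ginv := incr_bounded_id incr (fun q _ => ltn_ord ((w^-1)%g (inord q))).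
rewrite -(invgK w) (_ : (w^-1)%g = 1%g) ?invg1 //.
apply/permP => x; apply/val_inj; rewrite perm1 /=.
by have := ginv x (ltn_ord x); rewrite /g inord_val.
Qed.

Section UnitTerms.
Variable n : nat.

Definition unit_terms (p : mpoly n) := all (fun t => t.2 == 1%R) p.

Lemma unit_terms_mmul p q : unit_terms p -> unit_terms q -> unit_terms (mmul p q).
Proof.
move=> /allP hp /allP hq; apply/allP => t /allpairsP[[x y] [/= xp yq ->]] /=.
by rewrite (eqP (hp _ xp)) (eqP (hq _ yq)) mulr1.
Qed.

Lemma unit_terms_flatten (l : seq (mpoly n)) : all unit_terms l -> unit_terms (flatten l).
Proof.
elim: l => //= p l IH /andP[hp hl].
by rewrite /unit_terms all_cat; apply/andP; split; [exact: hp | exact: IH].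
Qed.

Lemma unit_terms_foldr_mmul (l : seq (mpoly n)) :
  all unit_terms l -> unit_terms (foldr (@mmul n) (mone n) l).
Proof.
elim: l => [|p l IH] /=; first by rewrite /unit_terms /= ?eqxx.
by move=> /andP[hp hl]; apply: unit_terms_mmul => //; apply: IH.
Qed.

Lemma mcoef_unit_terms (p : mpoly n) b :
  unit_terms p -> mcoef p b = ((count (fun t => t.1 == b) p)%:R)%R.
Proof.
rewrite /mcoef; elim: p => [|x p IH] /=; first by rewrite big_nil.
move=> /andP[/eqP hx hp]; rewrite big_cons IH // natrD.
by case: (x.1 == b) => /=; rewrite ?hx ?add0r.
Qed.

Lemma mcoef_unit_terms_neq0 (p : mpoly n) b :
  unit_terms p -> (b, 1%R) \in p -> mcoef p b != 0%R.
Proof.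
move=> hp bp; rewrite mcoef_unit_terms // Num.Theory.pnatr_eq0 -lt0n -has_count.
by apply/hasP; exists (b, 1%R).
Qed.

Lemma mem_foldr_mmul (l : seq nat) (F : nat -> mpoly n) (g : nat -> mono n) :
  (forall i, i \in l -> (g i, 1%R) \in F i) ->
  (foldr (fun i m => mulm (g i) m) (mono1 n) l, 1%R) \in foldr (@mmul n) (mone n) (map F l).
Proof.
elim: l => [|i l IH] /=; first by rewrite mem_seq1.
move=> hl; have := IH (fun j jl => hl j (mem_behead (s := i :: l) jl)).
move/(allpairs_f (fun a b => (mulm a.1 b.1, (a.2 * b.2)%R)) (hl i (mem_head _ _))).
by rewrite /= mulr1.
Qed.

End UnitTerms.

Section Chains.
Variable k : nat.
Local Notation n := k.-1.

Lemma unit_terms_Rpoly (w : 'S_k) : unit_terms (Rpoly w).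
Proof.
have unit_terms_linform (a c : 'I_k) : unit_terms (linform a c).
  by apply: unit_terms_flatten; apply/allP => p /mapP[j _ ->]; rewrite /unit_terms /= ?eqxx.
apply: unit_terms_flatten; apply/allP => p /mapP[s _ ->].
apply: unit_terms_foldr_mmul; apply/allP => q /mapP[i _ ->].
by apply: unit_terms_flatten; apply/allP => r /mapP[x _ ->].
Qed.

Lemma mem_cover_wt (u : 'S_k) (a c : 'I_k) (j : 'I_n) : a < c -> a <= j < c ->
  (monoX j, 1%R) \in cover_wt u (swap_pos u a c).
Proof.
move=> ac hj; apply/flattenP; exists (linform a c).
  apply: (map_f (fun p : 'I_k * 'I_k => linform p.1 p.2) (x := (a, c))).
  by rewrite mem_filter /= ac eqxx mem_enum.
apply/flattenP; exists (mvar j); last by rewrite mem_seq1.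
by apply: map_f; rewrite mem_filter hj mem_enum.
Qed.

(* [js] records, for the [i]-th cover of the chain [s] from [1] to [u], the
   (0-based) index of one variable occurring in the weight of that cover. *)
Definition labelled_chain (u : 'S_k) (s : seq 'S_k) (js : seq nat) :=
  [/\ size s = (ell u).+1, size js = ell u, nth 1%g s 0 = 1%g, nth 1%g s (ell u) = u &
   forall i, i < ell u -> exists a c : 'I_k, [/\ a < c,
     nth 1%g s i.+1 = swap_pos (nth 1%g s i) a c,
     ell (nth 1%g s i.+1) = (ell (nth 1%g s i)).+1 & a <= nth 0 js i < c]].

Definition mono_of_labels (js : seq nat) : mono n := [ffun v => count_mem (val v) js].

Lemma labelled_chain1 : labelled_chain 1%g [:: 1%g] [::].
Proof. by split; rewrite ?ell_perm1. Qed.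

Lemma labelled_chain_rcons (u : 'S_k) s js (a c : 'I_k) j :
  labelled_chain u s js -> a < c -> val (u c) = (val (u a)).+1 -> a <= j < c ->
  labelled_chain (swap_pos u a c) (rcons s (swap_pos u a c)) (rcons js j).
Proof.
case=> hs hjs h0 hlast hcov ac huc hj; have hell := ell_swap_succ ac huc.
split; rewrite ?hell ?size_rcons ?hs ?hjs ?nth_rcons ?hs ?ltnn ?eqxx //.
move=> i; rewrite ltnS leq_eqVlt => /orP[/eqP->|hi].
  by exists a, c; rewrite !nth_rcons hs hjs ltnn eqxx ltnSn hlast ltnn eqxx.
have [a' [c' [h1 h2 h3 h4]]] := hcov _ hi.
by exists a', c'; rewrite !nth_rcons hs hjs !ltnS hi (ltnW hi).
Qed.

Lemma labelled_chain_term (u : 'S_k) s js :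
  labelled_chain u s js -> (mono_of_labels js, 1%R) \in Rpoly u.
Proof.
case=> hs hjs h0 hlast hcov.
pose t : (ell u).+1.-tuple 'S_k := @Tuple _ _ s (introT eqP hs).
apply/flattenP; exists (chain_wt t).
  apply: map_f; rewrite mem_filter mem_enum andbT /is_chain /= h0 hlast !eqxx /=.
  apply/allP => i; rewrite mem_iota /= => /hcov[a [c [ac e1 e2 _]]].
  rewrite /covers e2 eqxx andbT; apply/existsP; exists a; apply/existsP; exists c.
  by rewrite ac e1 eqxx.
pose g i : mono n := [ffun v => (val v == nth 0 js i) : nat].
have -> : mono_of_labels js = foldr (fun i m => mulm (g i) m) (mono1 n) (iota 0 (ell u)).
  apply/ffunP => v; rewrite ffunE -hjs -[in LHS](take_size js).
  rewrite -(map_nth_iota0 0 (leqnn _)) count_map.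
  by elim: (iota _ _) => [|i l IH] /=; rewrite !ffunE ?IH // eq_sym.
apply: mem_foldr_mmul => i; rewrite mem_iota /= => /hcov[a [c [ac -> _ hj]]].
have jn : nth 0 js i < n by move: hj (ltn_ord c); lia.
by rewrite (_ : g i = monoX (Ordinal jn)) ?mem_cover_wt //; apply/ffunP => v; rewrite !ffunE.
Qed.

Lemma sum_mono_of_labels js : all (fun j => j < n) js ->
  \sum_(v < n) mono_of_labels js v = size js.
Proof.
elim: js => [|j js IH] /=; first by rewrite big1 // => v _; rewrite ffunE.
move=> /andP[jn hjs]; rewrite -(IH hjs) -add1n.
have -> : \sum_(v < n) mono_of_labels (j :: js) v =
          \sum_(v < n) ((val v == j) + mono_of_labels js v).
  by apply: eq_bigr => v _; rewrite !ffunE /= eq_sym.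
rewrite big_split /= (bigD1 (Ordinal jn)) //= eqxx big1 // => v.
by rewrite -val_eqE /= => /negbTE->.
Qed.

Lemma labelled_chain_mcoef (u : 'S_k) s js : labelled_chain u s js ->
  \sum_(v < n) mono_of_labels js v = ell u /\ mcoef (Rpoly u) (mono_of_labels js) != 0%R.
Proof.
move=> hc; split; last exact: mcoef_unit_terms_neq0 (unit_terms_Rpoly u) (labelled_chain_term hc).
case: hc => _ hjs _ _ hcov; rewrite -hjs sum_mono_of_labels //.
apply/(all_nthP 0) => i; rewrite hjs => /hcov[a [c [_ _ _ /andP[_ hj]]]].
by move: hj (ltn_ord c); lia.
Qed.

End Chains.

Lemma labelled_chain_exists m (w : 'S_m.+1) : exists s js, labelled_chain w s js.
Proof.
move: (ltnSn (ell w)); move: {2}(ell w).+1 => N; elim: N w => // N IH w hN.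
have [->|hw] := eqVneq w 1%g; first by exists [:: 1%g], [::]; exact: labelled_chain1.
have [a [c [ac hwac]]] := exists_adjacent_values hw.
pose u := swap_pos w a c.
have huac : val (u c) = (val (u a)).+1 by rewrite !swap_posE tpermL tpermR.
have hell : ell w = (ell u).+1 by rewrite -(ell_swap_succ ac huac) swap_posK.
have [s [js hc]] := IH u ltac:(by rewrite -ltnS -hell).
exists (rcons s w), (rcons js a).
by have := labelled_chain_rcons hc ac huac (j := a); rewrite swap_posK leqnn ac; apply.
Qed.

Section Domination.
Variable n : nat.
Implicit Types (P Q : 'I_n -> nat).

Definition dominated P Q :=
  forall h, 0 < h -> #|[set e | h <= P e]| <= #|[set e | h <= Q e]|.

Lemma dominated_witness P Q e : dominated P Q -> 0 < P e -> exists e', P e <= Q e'.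
Proof.
move=> dom he; have /card_gt0P[e' he'] : 0 < #|[set e' | P e <= Q e']|.
  by apply: leq_trans (dom _ he); apply/card_gt0P; exists e; rewrite inE.
by exists e'; rewrite inE in he'.
Qed.

Lemma dominated_remove P Q P' Q' (e e' : 'I_n) :
  (forall x y : 'I_n, x <= y -> Q x <= Q y) -> dominated P Q ->
  0 < P e -> P e <= Q e' -> (forall i, P e <= Q i -> e' <= i) ->
  (forall i, P i = (i == e) + P' i) ->
  (forall i, Q' i = if i == e' then (Q e').-1 else Q i) ->
  dominated P' Q'.
Proof.
move=> homoQ dom he he' emin hP hQ h h0.
have P'le i : P' i <= P i by rewrite hP leq_addl.
have [hW|hW] := eqVneq h (Q e'); last first.
  apply: leq_trans (_ : #|[set i | h <= P i]| <= _).
    by apply/subset_leq_card/subsetP => i; rewrite !inE => /leq_trans; apply.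
  apply: leq_trans (dom h h0) _; apply/subset_leq_card/subsetP => i; rewrite !inE hQ.
  by case: eqP => [->|_] //; move: hW; lia.
set v := P e in he he' emin.
have S1 : #|[set i | h <= P' i]| <= #|[set i | v <= P i] :\ e|.
  have := hP e; rewrite eqxx -/v => hPe.
  apply/subset_leq_card/subsetP => i; rewrite !inE hP => hi.
  by case: eqP hi => [->|_] /=; lia.
have S2 : #|[set i | v <= P i]| = 1 + #|[set i | v <= P i] :\ e|.
  by rewrite (cardsD1 e) inE leqnn.
have S3 : #|[set i | v <= Q i]| <= #|[set i : 'I_n | e' <= i]|.
  by apply/subset_leq_card/subsetP => i; rewrite !inE => /emin.
have S4 : #|[set i : 'I_n | e' <= i]| = 1 + #|[set i : 'I_n | e' < i]|.
  rewrite (cardsD1 e') inE leqnn; congr (_ + _); apply: eq_card => i.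
  by rewrite !inE ltn_neqAle val_eqE eq_sym.
have S5 : #|[set i : 'I_n | e' < i]| <= #|[set i | h <= Q' i]|.
  apply/subset_leq_card/subsetP => i; rewrite !inE hQ => hi.
  by rewrite -val_eqE /= gtn_eqF // hW homoQ // ltnW.
have := leq_trans (dom v he) S3; rewrite S2 S4 leq_add2l => H.
exact: leq_trans S1 (leq_trans H S5).
Qed.

Lemma dominated_shift P Q P' Q' (j : 'I_n) :
  (forall x y : 'I_n, x <= y -> Q x <= Q y) -> dominated P Q ->
  (forall i, 0 < P i -> j < i) -> (forall i, 0 < P' i -> j < i) ->
  (forall i, P' i <= (P i).+1) -> (forall i : 'I_n, j < i -> Q' i = (Q i).+1) ->
  dominated P' Q'.
Proof.
move=> homoQ dom suppP suppP' P'le hQ h h0.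
have [->|h1] := eqVneq h 1.
  apply: leq_trans (_ : #|[set i : 'I_n | j < i]| <= _).
    by apply/subset_leq_card/subsetP => i; rewrite !inE => /suppP'.
  by apply/subset_leq_card/subsetP => i; rewrite !inE => hi; rewrite hQ.
apply: leq_trans (_ : #|[set i | h.-1 <= P i]| <= _).
  by apply/subset_leq_card/subsetP => i; rewrite !inE; have := P'le i; lia.
have [hj|hj] := leqP h.-1 (Q j).
  apply: leq_trans (_ : #|[set i : 'I_n | j < i]| <= _).
    by apply/subset_leq_card/subsetP => i; rewrite !inE => hi; apply: suppP; lia.
  apply/subset_leq_card/subsetP => i; rewrite !inE => hi.
  by rewrite hQ //; have := homoQ _ _ (ltnW hi); lia.
apply: leq_trans (dom h.-1 ltac:(lia)) _.
apply/subset_leq_card/subsetP => i; rewrite !inE => hi.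
have ji : j < i by rewrite ltnNge; apply/negP => /homoQ; lia.
by rewrite hQ //; lia.
Qed.

End Domination.

Section Positions.
Variable n : nat.
Local Notation k := n.+1.

Definition pos_val (u : 'S_k) (p : nat) : nat := u (inord p).

Definition incr_after (u : 'S_k) (j : nat) :=
  forall p p', j < p -> p < p' -> p' <= n -> pos_val u p < pos_val u p'.

(* When [incr_after u j], [slack u j e] counts the values smaller than the one
   in position [e + 1] that sit in positions [<= j]. *)
Definition slack (u : 'S_k) (j : nat) (e : 'I_n) : nat :=
  if j <= e then pos_val u e.+1 - (e - j) else 0.

Lemma pos_val1 p : p <= n -> pos_val 1%g p = p.
Proof. by move=> hp; rewrite /pos_val perm1 inordK. Qed.

Lemma pos_val_swap u (a c : 'I_k) p : p <= n -> p != a ->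
  pos_val (swap_pos u a c) p = if p == c then u a : nat else pos_val u p.
Proof.
move=> pn pa; rewrite /pos_val swap_posE.
have pk : p < k by [].
have -> : inord p = Ordinal pk by apply/val_inj; rewrite /= inordK.
case: eqP => [pc|/eqP pc]; first by rewrite (_ : Ordinal pk = c) ?tpermR //; apply/val_inj.
by rewrite tpermD // -val_eqE eq_sym.
Qed.

Lemma incr_after_succ u j : incr_after u j -> incr_after u j.+1.
Proof. by move=> hr p p' h1 h2 h3; apply: hr => //; lia. Qed.

Lemma pos_val_incr u j p p' : incr_after u j -> j < p -> p <= p' -> p' <= n ->
  pos_val u p + (p' - p) <= pos_val u p'.
Proof.
move=> hr jp; elim: p' => [|p' IH]; first by lia.
rewrite leq_eqVlt => /orP[/eqP<-|hp] hn; first by rewrite subnn addn0.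
have := IH ltac:(lia) ltac:(lia); have := hr p' p'.+1 ltac:(lia) (ltnSn _) hn; lia.
Qed.

Lemma pos_val_ge u j p : incr_after u j -> j < p <= n -> p - j - 1 <= pos_val u p.
Proof.
move=> hr /andP[jp pn]; have := pos_val_incr hr (ltnSn j) jp pn; lia.
Qed.

Lemma pos_val_slack u j (e : 'I_n) : incr_after u j -> j <= e ->
  pos_val u e.+1 = slack u j e + (e - j).
Proof.
move=> hr je; rewrite /slack je.
have := pos_val_ge (p := e.+1) hr ltac:(have := ltn_ord e; lia); lia.
Qed.

Lemma slack_homo u j : incr_after u j ->
  forall x y : 'I_n, x <= y -> slack u j x <= slack u j y.
Proof.
move=> hr x y xy; rewrite {1}/slack; case: (leqP j x) => jx //=.
have := pos_val_slack hr (leq_trans jx xy).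
have := pos_val_incr hr (p := x.+1) (p' := y.+1) ltac:(lia) ltac:(lia) (ltn_ord y).
lia.
Qed.

Lemma slack_succ u j (e : 'I_n) : incr_after u j -> j < e ->
  slack u j.+1 e = (slack u j e).+1.
Proof.
move=> hr je; have := pos_val_slack hr (ltnW je).
by rewrite /slack je (ltnW je); lia.
Qed.

Lemma pos_val_lt_min_slack u j (e' : 'I_n) : incr_after u j ->
  (forall i : 'I_n, j <= i -> i < e' -> slack u j i < slack u j e') ->
  forall p, j < p -> p <= e' -> (pos_val u p).+1 < pos_val u e'.+1.
Proof.
move=> hr below p jp pe; have pn : p.-1 < n by have := ltn_ord e'; lia.
have := pos_val_slack hr (e := Ordinal pn) ltac:(rewrite /=; lia).
have := below (Ordinal pn) ltac:(rewrite /=; lia) ltac:(rewrite /=; lia).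
have := pos_val_slack hr (e := e') ltac:(lia).
by rewrite /= prednK; lia.
Qed.

(* The value [q] just below the one in position [e' + 1] sits in a position
   [a <= j]: by the previous lemma it is not in positions [j + 1 .. e'], and the
   values after [e' + 1] are larger. *)
Lemma swap_adjacent_slack u j (e' : 'I_n) : incr_after u j -> 0 < slack u j e' ->
  (forall i : 'I_n, j <= i -> i < e' -> slack u j i < slack u j e') ->
  exists a c : 'I_k, [/\ a < c, val (u c) = (val (u a)).+1, a <= j < c,
    incr_after (swap_pos u a c) j &
    forall i, slack (swap_pos u a c) j i = if i == e' then (slack u j e').-1 else slack u j i].
Proof.
move=> hr hW below.
have je' : j <= e' by move: hW; rewrite /slack; case: (leqP j e').
have hWe' := pos_val_slack hr je'; set W := slack u j e' in hW below hWe'.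
set q := (pos_val u e'.+1).-1.
have hq : pos_val u e'.+1 = q.+1 by rewrite /q; lia.
have lowq p : j < p -> p <= e' -> pos_val u p < q.
  by move=> jp pe; have := pos_val_lt_min_slack hr below jp pe; lia.
have highq p : e'.+1 < p -> p <= n -> q < pos_val u p.
  by move=> h1 h2; have := hr e'.+1 p ltac:(lia) h1 h2; lia.
have qk : q < k by have := ltn_ord (u (inord e'.+1)); rewrite -/(pos_val u e'.+1); lia.
pose a := (u^-1)%g (inord q); pose c : 'I_k := inord e'.+1.
have ua : nat_of_ord (u a) = q by rewrite /a permKV inordK.
have vc : nat_of_ord c = e'.+1 by rewrite inordK //; have := ltn_ord e'; lia.
have aj : a <= j.
  rewrite leqNgt; apply/negP => ja.
  have : pos_val u a = q by rewrite /pos_val inord_val.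
  have an : a <= n by have := ltn_ord a; lia.
  case: (ltngtP a e'.+1) => h; first by have := lowq a ja ltac:(lia); lia.
    by have := highq a h an; lia.
  by rewrite h hq; lia.
have hswap p : j < p -> p <= n ->
    pos_val (swap_pos u a c) p = if p == e'.+1 then q else pos_val u p.
  by move=> jp pn; rewrite pos_val_swap ?vc ?ua //; apply/eqP; lia.
exists a, c; split.
- by rewrite vc; lia.
- by rewrite /= ua -hq.
- by rewrite aj vc; lia.
- move=> p p' h1 h2 h3; rewrite !hswap //; try lia.
  case: eqP => hp; case: eqP => hp'; try lia.
  + by have := hr p p' h1 h2 h3; rewrite hp hq; lia.
  + by apply: lowq; lia.
  + exact: hr.
- move=> i; rewrite {1 3}/slack; case: (leqP j i) => ji.
    rewrite hswap ?eqSS -?val_eqE /=; try (have := ltn_ord i; lia).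
    by case: eqP => [ie|//]; move: hWe' hq; rewrite ie; lia.
  by case: eqP => // ie; move: ji je'; rewrite ie; lia.
Qed.

End Positions.

Section MatchingChain.
Variable n' : nat.
Local Notation n := n'.+1.
Local Notation k := n'.+2.
Variable b : mono n.
Variable f : 'I_n -> nat -> 'I_n * 'I_n.
Hypothesis f_edge : forall i t, t < b i ->
  ((f i t).1 <= (f i t).2) && ((f i t).1 <= i <= (f i t).2).
Hypothesis f_inj : forall i t i' t', t < b i -> t' < b i' ->
  f i t = f i' t' -> i = i' /\ t = t'.

(* Row [i] of [D_b] is carved out of a finite type: every [t < b i] fits in
   ['I_(\sum_i b i).+1]. *)
Definition lower := ('I_n * 'I_(\sum_i b i).+1)%type.
Definition Db : {set lower} := [set x : lower | x.2 < b x.1].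
Definition fm (x : lower) := f x.1 x.2.

Lemma b_lt_bound i : b i < (\sum_i b i).+1.
Proof. by rewrite ltnS (bigD1 i) //= leq_addr. Qed.

Lemma fm_inj : {in Db &, injective fm}.
Proof.
move=> [i t] [i' t']; rewrite !inE => hx hy /(f_inj hx hy) /= [-> ht].
by congr pair; apply: val_inj.
Qed.

Lemma fm_edge x : x \in Db -> (fm x).1 <= x.1 <= (fm x).2.
Proof. by rewrite inE => /f_edge /andP[]. Qed.

(* Lower vertices still to be realised once all of the rows [< j] and the first
   [t0] vertices of row [j] are. *)
Definition pending (j t0 : nat) : {set lower} :=
  [set x in Db | (j < x.1) || ((x.1 == j :> nat) && (t0 <= x.2))].

Definition load (j t0 : nat) (e : 'I_n) :=
  #|[set x in pending j t0 | ((fm x).2 == e) && ((fm x).1 <= j)]|.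

Definition reached (j t0 : nat) := exists u s js,
  [/\ labelled_chain u s js, incr_after u j, dominated (load j t0) (slack u j) &
      forall v : 'I_n, count_mem (val v) js =
        if v < j then b v else if val v == j then t0 else 0].


Lemma reached0 : reached 0 0.
Proof.
exists 1%g, [:: 1%g], [::]; split.
- exact: labelled_chain1.
- by move=> p p' h1 h2 h3; rewrite !pos_val1 //; lia.
- have load_le1 e : load 0 0 e <= 1.
    apply/card_le1_eqP => x y; rewrite !inE.
    move=> /andP[/andP[xD _] /andP[/eqP ex hx]] /andP[/andP[yD _] /andP[/eqP ey hy]].
    apply: fm_inj; rewrite ?inE //; move: ex ey hx hy.
    case: (fm x) => [l1 r1]; case: (fm y) => [l2 r2] /= -> -> h1 h2.
    by congr pair; apply/val_inj => /=; lia.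
  have slack1 e : slack 1%g 0 e = 1 by rewrite /slack leq0n pos_val1 ?subn0 ?subSnn.
  move=> h h0; case: (ltnP 1 h) => hh.
    rewrite (_ : [set e | h <= load 0 0 e] = set0) ?cards0 //.
    by apply/setP => e; rewrite !inE; have := load_le1 e; lia.
  rewrite (_ : [set e | h <= slack 1%g 0 e] = setT) ?cardsT ?max_card //.
  by apply/setP => e; rewrite !inE slack1; lia.
- by move=> v; rewrite ltn0; case: eqP.
Qed.

Lemma pending_next_row (j : 'I_n) : pending j.+1 0 = pending j (b j).
Proof.
apply/setP => -[i t]; rewrite !inE /=.
case: (ltnP t (b i)) => ht //=.
case: (ltngtP j i) => h /=.
- by apply/orP; case: (ltngtP j.+1 i) => h2; [left | lia | right; apply/eqP].
- by apply/negP => /orP[|/eqP]; lia.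
- move/val_inj: h ht => <- ht; rewrite [b j <= t]leqNgt ht.
  by apply/negP => /orP[|/andP[/eqP]]; lia.
Qed.

Lemma pending_row_done (j : 'I_n) x : x \in pending j (b j) -> x \in Db /\ j < x.1.
Proof.
rewrite inE => /andP[xD /orP[//|/andP[/eqP h1 h2]]].
by move: xD; rewrite inE (_ : x.1 = j) ?ltnNge ?h2 //; apply/val_inj.
Qed.

Lemma load_row_done_gt0 (j : 'I_n) l (e : 'I_n) :
  0 < #|[set x in pending j (b j) | ((fm x).2 == e) && ((fm x).1 <= l)]| -> j < e.
Proof.
move=> /card_gt0P[x]; rewrite inE => /andP[/pending_row_done[xD jx] /andP[/eqP <- _]].
by have /andP[_ ?] := fm_edge xD; exact: leq_trans jx _.
Qed.

(* Passing to row [j + 1] adds the vertices whose matched interval starts at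
   [j + 1]; by injectivity of the matching there is at most one per end [e]. *)
Lemma load_next_row (j : 'I_n) (e : 'I_n) : load j.+1 0 e <= (load j (b j) e).+1.
Proof.
rewrite /load pending_next_row; set P := pending j (b j).
set A := [set x in P | ((fm x).2 == e) && ((fm x).1 <= j)].
set C := [set x in P | ((fm x).2 == e) && ((fm x).1 == j.+1 :> nat)].
have C1 : #|C| <= 1.
  apply/card_le1_eqP => x y; rewrite [x \in C]inE [y \in C]inE.
  move=> /andP[/pending_row_done[xD _] /andP[/eqP ex hx]].
  move=> /andP[/pending_row_done[yD _] /andP[/eqP ey hy]].
  apply: fm_inj => //; move: ex ey hx hy.
  case: (fm x) => [l1 r1]; case: (fm y) => [l2 r2] /= -> -> /eqP h1 /eqP h2.
  by congr pair; apply/val_inj => /=; lia.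
apply: leq_trans (_ : #|A :|: C| <= _); last first.
  by apply: leq_trans (leq_card_setU _ _) _; move: C1; lia.
apply/subset_leq_card/subsetP => x; rewrite !inE => /andP[xP /andP[ex hx]].
by rewrite xP ex /=; case: (ltngtP (fm x).1 j.+1) hx => //= h; lia.
Qed.

Lemma reached_next_row (j : 'I_n) : j.+1 < n -> reached j (b j) -> reached j.+1 0.
Proof.
move=> hjn [u [s [js [hc hr hdom hcnt]]]].
exists u, s, js; split => //.
- exact: incr_after_succ.
- apply: (dominated_shift (j := j) (slack_homo hr) hdom).
  + by move=> e /load_row_done_gt0.
  + by move=> e; rewrite /load pending_next_row => /load_row_done_gt0.
  + exact: load_next_row.
  + by move=> e /(slack_succ hr).
- move=> v; rewrite hcnt; case: (ltngtP v j) => h.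
  + by rewrite ltnS (ltnW h).
  + by rewrite ltnNge h /=; case: eqP; lia.
  + by rewrite h ltnSn; congr (b _); apply/val_inj.
Qed.

Section RowStep.
Variables (j : 'I_n) (t0 : nat).
Hypothesis t0_lt : t0 < b j.

Definition next_vertex : lower := (j, Ordinal (ltn_trans t0_lt (b_lt_bound j))).

Lemma pending_succ : pending j t0.+1 = pending j t0 :\ next_vertex.
Proof.
apply/setP => -[i t]; rewrite !inE /=.
have [hx|hne] := eqVneq (i, t) next_vertex.
  by move: hx; rewrite /next_vertex => -[-> ->] /=; rewrite !ltnn !andbF.
have [ei|nei] := eqVneq i j; last first.
  by rewrite (_ : (nat_of_ord i == j) = false) //; apply/negbTE; rewrite val_eqE.
subst i; rewrite ltnn eqxx /=.
have ht : nat_of_ord t != t0.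
  by apply: contraNneq hne => ht; apply/eqP; rewrite /next_vertex; f_equal; apply: val_inj.
by rewrite [t0 < t]ltn_neqAle eq_sym ht.
Qed.

Lemma load_succ (i : 'I_n) : load j t0 i = (i == (f j t0).2) + load j t0.+1 i.
Proof.
have /and3P[_ hl _] := f_edge t0_lt.
rewrite /load pending_succ (cardsD1 next_vertex) !inE -[fm next_vertex]/(f j t0) /=.
rewrite t0_lt ltnn leqnn eq_refl hl /= !andbT.
congr (_ + _); first by rewrite eq_sym.
by apply: eq_card => x; rewrite !inE andbA.
Qed.

Lemma reached_succ : reached j t0 -> reached j t0.+1.
Proof.
move=> [u [s [js [hc hr hdom hcnt]]]].
set e := (f j t0).2; set v := load j t0 e.
have v_gt0 : 0 < v by rewrite /v load_succ eqxx.
have [e0 he0] := dominated_witness hdom v_gt0.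
have [e' he' emin] := @arg_minnP _ e0 (fun i => v <= slack u j i) (@nat_of_ord n) he0.
have below (i : 'I_n) : j <= i -> i < e' -> slack u j i < slack u j e'.
  move=> _ ie'; rewrite ltnNge; apply/negP => /(leq_trans he') /emin; lia.
have [a [c [ac huc hjc hr' hslack]]] := swap_adjacent_slack hr (leq_trans v_gt0 he') below.
exists (swap_pos u a c), (rcons s (swap_pos u a c)), (rcons js j); split.
- exact: labelled_chain_rcons.
- exact: hr'.
- apply: (dominated_remove (slack_homo hr) hdom v_gt0 he' emin) => // i.
  by rewrite load_succ.
- move=> w; rewrite -cats1 count_cat /= hcnt addn0.
  by case: (ltngtP w j) => hw; rewrite ?addn0 ?addn1.
Qed.

End RowStep.

Lemma reached_row (j : 'I_n) t : t <= b j -> reached j 0 -> reached j t.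
Proof.
by elim: t => [|t IH] // ht h0; apply: reached_succ (IH (ltnW ht) h0).
Qed.

Lemma reached_rows j : j < n -> reached j 0.
Proof.
elim: j => [|j IH] hj; first exact: reached0.
have hj' : j < n by lia.
apply: (reached_next_row (j := Ordinal hj') hj).
exact: (reached_row (j := Ordinal hj') (leqnn _) (IH hj')).
Qed.

Lemma matching_labelled_chain :
  exists (u : 'S_k) s js, labelled_chain u s js /\ mono_of_labels k js = b.
Proof.
have [u [s [js [hc _ _ hcnt]]]] := reached_row (leqnn (b ord_max)) (reached_rows (ltnSn n')).
exists u, s, js; split => //; apply/ffunP => v; rewrite ffunE hcnt /=.
case: (ltngtP v n') => hv //; first by have := ltn_ord v; lia.
by congr (b _); apply/val_inj.
Qed.

End MatchingChain.

Unset Implicit Arguments.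

Theorem mainTheorem9 (k : nat) (hk : 2 <= k) :
  (forall w : 'S_k, exists b : mono k.-1,
      (\sum_(i < k.-1) b i)%N = ell w /\ mcoef (Rpoly w) b != 0%R)
  /\
  (forall b : mono k.-1, matching_seq b ->
      exists w : 'S_k, ell w = (\sum_(i < k.-1) b i)%N /\ mcoef (Rpoly w) b != 0%R).
Proof.
case: k hk => [|[|n']] // _; split.
- move=> w; have [s [js /labelled_chain_mcoef[hsum hcoef]]] := labelled_chain_exists w.
  by exists (mono_of_labels _ js).
- move=> b [f [f_edge f_inj]].
  have [u [s [js [/labelled_chain_mcoef[hsum hcoef] hb]]]] := matching_labelled_chain f_edge f_inj.
  by exists u; rewrite -hb.
Qed.
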